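(* For $X,Y\in L^\infty$, \[ d_H(\mathbb{E}[X],\mathbb{E}[Y]) \le d_H(\mathrm{supp}\,X,\mathrm{supp}\,Y) \le \|X-Y\|_\infty, \] where $\mathrm{supp}\,X$ denotes the closed support of the law of $X$.
   Context: $\mathbb{K}$ is a local field with non-archimedean absolute value $|\cdot|$ satisfying $|x|=0 \iff x=0$, $|xy|=|x||y|$ and $|x+y|\le |x|\vee|y|$. $(\Omega,\mathcal{F},\mathbb{P})$ is a probability space; random variables equal a.s. are identified. $L^\infty$ is the space of $\mathbb{K}$-valued random variables $X$ with $\|X\|_\infty:=\operatorname{ess\,sup}|X|<\infty$. For $X\in L^\infty$, $\varepsilon(X):=\inf\{\|X-c\|_\infty : c\in\mathbb{K}\}$ and $\mathbb{E}[X]:=\{c\in\mathbb{K} : \|X-c\|_\infty=\varepsilon(X)\}$. For subsets $A,B\subseteq\mathbb{K}$, $d_H(A,B):=\sup_{a\in A}\inf_{b\in B}|a-b| \vee \sup_{b\in B}\inf_{a\in A}|b-a|$. *)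

From HB Require Import structures.
From mathcomp Require Import all_boot all_order all_algebra.
From mathcomp Require Import all_classical all_reals all_analysis ess_sup_inf.
Set Implicit Arguments. Unset Strict Implicit. Unset Printing Implicit Defensive.
Import Order.TTheory GRing.Theory Num.Theory numFieldNormedType.Exports.
Local Open Scope classical_set_scope.
Local Open Scope ring_scope.

(* A non-archimedean local field: a field K with a non-trivial (non-discrete)
   ultrametric absolute value abs : K -> R whose closed unit ball is
   (sequentially) compact for the metric (x,y) |-> abs (x - y), i.e. K is
   locally compact for the topology induced by abs. *)
Record nonarch_local_field (R : realType) (K : fieldType) (abs : K -> R) : Prop := {
  nlf_ge0 : forall x, 0 <= abs x;
  nlf_eq0 : forall x, abs x = 0 <-> x = 0;
  nlf_mul : forall x y, abs (x * y) = abs x * abs y;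
  nlf_ultra : forall x y, abs (x + y) <= Num.max (abs x) (abs y);
  nlf_nontriv : exists x, abs x != 0 /\ abs x != 1;
  nlf_compact : forall u : nat -> K, (forall n, abs (u n) <= 1) ->
      exists (phi : nat -> nat) (l : K),
        (forall n, (phi n < phi n.+1)%N) /\
        (fun n => abs (u (phi n) - l)) @ \oo --> (0 : R) }.

Section Defs.
Context (R : realType) (K : fieldType) (abs : K -> R).
Context (d : measure_display) (T : measurableType d) (P : probability T R).

(* Borel measurability of X : T -> K (the Borel sigma-algebra of the
   separable ultrametric space K is generated by the open balls). *)
Definition Kmeasurable (X : T -> K) : Prop :=
  forall (c : K) (r : R), measurable (X @^-1` [set x | abs (x - c) < r]).

Definition normInf (X : T -> K) : \bar R := ess_sup P (fun w => (abs (X w))%:E).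

Definition Linfty (X : T -> K) : Prop := Kmeasurable X /\ (normInf X < +oo)%E.

Definition epsK (X : T -> K) : \bar R :=
  ereal_inf [set normInf (fun w => X w - c) | c in [set: K]].

Definition EK (X : T -> K) : set K := [set c | normInf (fun w => X w - c) = epsK X].

Definition suppK (X : T -> K) : set K :=
  [set x | forall r : R, 0 < r -> (0 < P (X @^-1` [set y | (abs (y - x) < r)%R]))%E].

Definition dH (A B : set K) : \bar R :=
  maxe (ereal_sup [set ereal_inf [set (abs (a - b))%:E | b in B] | a in A])
       (ereal_sup [set ereal_inf [set (abs (b - a))%:E | a in A] | b in B]).
End Defs.

From HB Require Import structures.
From mathcomp Require Import all_boot all_order all_algebra.
From mathcomp Require Import all_classical all_reals all_analysis ess_sup_inf.
From mathcomp Require Import ring lra.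
Set Implicit Arguments. Unset Strict Implicit. Unset Printing Implicit Defensive.
Import Order.TTheory GRing.Theory Num.Theory.
Local Open Scope classical_set_scope.
Local Open Scope ring_scope.

(* By the ultrametric inequality, for any x0 in supp X,
   ||X - c||_oo = sup_{x in supp X} |x - c| = max(||X - x0||_oo, |c - x0|).
   Hence eps(X) = ||X - x0||_oo and E[X] is the closed ball of radius eps(X)
   around any point of supp X.  Comparing these balls for X and Y, centred at
   t-close support points when d_H(supp X, supp Y) < t, gives the first
   inequality; the second holds because a.s. X lies in supp X, Y in supp Y and
   |X - Y| <= ||X - Y||_oo.  That X lies a.s. in its support needs the
   separability of K, which follows from local compactness: balls of K are
   totally bounded. *)

Lemma bernoulli_le_expr (R : realFieldType) (a : R) (n : nat) :
  1 <= a -> 1 + n%:R * (a - 1) <= a ^+ n.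
Proof.
move=> a1; elim: n => [|n IH]; first by rewrite mul0r addr0 expr0.
rewrite exprS -natr1.
have n0 : 0 <= n%:R :> R by [].
have : a * (1 + n%:R * (a - 1)) <= a * a ^+ n by rewrite ler_wpM2l //; lra.
have : 0 <= n%:R * ((a - 1) * (a - 1)) by apply: mulr_ge0 => //; nra.
nra.
Qed.

Lemma expr_unbounded (R : archiRealFieldType) (a M : R) :
  1 < a -> exists n : nat, M <= a ^+ n.
Proof.
move=> a1; set M' := Num.max M 0.
have hM : 0 <= M' / (a - 1) by apply: divr_ge0; [rewrite le_max lexx orbT|lra].
have := archi_boundP hM; set n := Num.Def.archi_bound _ => hn.
exists n; apply: le_trans (bernoulli_le_expr n (ltW a1)).
have : M' < n%:R * (a - 1) by rewrite -ltr_pdivrMr; lra.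
have : M <= M' by rewrite le_max lexx.
lra.
Qed.

Section ExtendedRealBounds.
Context (R : realType).
Local Open Scope ereal_scope.

Lemma lee_bound_gt (a b : \bar R) :
  (forall t : R, b < t%:E -> a <= t%:E) -> a <= b.
Proof.
case: b => [s| |] H; last 2 first.
- by rewrite leey.
- case: a H => [r| |//] H.
  + by have := H (r - 1)%R (ltNyr _); rewrite lee_fin => h; exfalso; lra.
  + by have := H 0%R (ltNyr _).
case: a H => [r| |] H; last by rewrite leNye.
- rewrite lee_fin leNgt; apply/negP => sr.
  have := H ((r + s) / 2)%R; rewrite !lte_fin !lee_fin.
  have : (s < (r + s) / 2)%R by lra.
  move=> /[swap]/[apply]; lra.
- have : (s < s + 1)%R by lra.
  by rewrite -lte_fin => /H.
Qed.

Lemma lee_bound_ge (a b : \bar R) :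
  (forall t : R, b <= t%:E -> a <= t%:E) -> a <= b.
Proof. by move=> H; apply: lee_bound_gt => t /ltW; apply: H. Qed.

End ExtendedRealBounds.

Section Ultrametric.
Variables (R : realType) (K : fieldType) (abs : K -> R).
Hypothesis hK : nonarch_local_field abs.

Lemma abs_ge0 x : 0 <= abs x. Proof. exact: nlf_ge0 hK x. Qed.

Lemma abs0 : abs 0 = 0. Proof. by apply/(nlf_eq0 hK). Qed.

Lemma abs_neq0 x : x != 0 -> abs x != 0.
Proof. by apply: contra => /eqP/(nlf_eq0 hK) ->. Qed.

Lemma abs1 : abs 1 = 1.
Proof.
have h := nlf_mul hK 1 1; rewrite mulr1 in h.
by apply: (mulfI (abs_neq0 (oner_neq0 K))); rewrite mulr1 -h.
Qed.

Lemma absN x : abs (- x) = abs x.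
Proof.
have h := nlf_mul hK (-1) (-1); rewrite mulrNN mulr1 abs1 in h.
have h0 := abs_ge0 (-1).
have absN1 : abs (-1) = 1 by apply/eqP; rewrite eq_le; apply/andP; split; nra.
by rewrite -mulN1r (nlf_mul hK) absN1 mul1r.
Qed.

Lemma absB x y : abs (x - y) = abs (y - x).
Proof. by rewrite -absN opprB. Qed.

Lemma absV x : x != 0 -> abs x^-1 = (abs x)^-1.
Proof.
move=> x0; have h := nlf_mul hK x x^-1; rewrite mulfV // abs1 in h.
by apply: (mulfI (abs_neq0 x0)); rewrite -h mulfV // abs_neq0.
Qed.

Lemma absX x n : abs (x ^+ n) = abs x ^+ n.
Proof.
by elim: n => [|n IH]; rewrite ?expr0 ?abs1 // !exprS (nlf_mul hK) IH.
Qed.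

Lemma abs_ultra x y z : abs (x - z) <= Num.max (abs (x - y)) (abs (y - z)).
Proof. by have := nlf_ultra hK (x - y) (y - z); rewrite addrA subrK. Qed.

Lemma abs_ultra_le x y z r :
  abs (x - y) <= r -> abs (y - z) <= r -> abs (x - z) <= r.
Proof. by move=> h1 h2; apply: le_trans (abs_ultra x y z) _; rewrite ge_max h1. Qed.

Lemma abs_ultra_lt x y z r :
  abs (x - y) < r -> abs (y - z) < r -> abs (x - z) < r.
Proof. by move=> h1 h2; apply: le_lt_trans (abs_ultra x y z) _; rewrite gt_max h1. Qed.

Lemma abs_unbounded (M : R) : exists2 l : K, l != 0 & M <= abs l.
Proof.
have [x [x0 x1]] := nlf_nontriv hK.
have xn0 : x != 0 by apply: contra x0 => /eqP ->; rewrite abs0.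
have [a an0 a1] : exists2 a : K, a != 0 & 1 < abs a.
  have [lt1|ge1] := ltP (abs x) 1; last by exists x; rewrite // lt_neqAle eq_sym x1.
  exists x^-1; first by rewrite invr_eq0.
  by rewrite absV // invf_gt1 // lt_neqAle eq_sym x0 abs_ge0.
have [n hn] := expr_unbounded M a1.
by exists (a ^+ n); rewrite ?expf_neq0 ?absX.
Qed.

(* Rescaling by a large scalar brings the sequence into the compact unit ball,
   where two terms of a convergent subsequence are closer than rho. *)
Lemma no_separated_seq (rho M : R) (u : nat -> K) :
  0 < rho -> (forall n, abs (u n) <= M) ->
  ~ (forall m n, (m < n)%N -> rho <= abs (u n - u m)).
Proof.
move=> rho0 uM sep.
have [l l0 lM] := abs_unbounded M.
have al : 0 < abs l by rewrite lt_neqAle eq_sym abs_neq0 // abs_ge0.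
pose v n := u n / l.
have v1 n : abs (v n) <= 1.
  by rewrite (nlf_mul hK) absV // ler_pdivrMr ?mul1r //; apply: le_trans lM.
have [phi [c [phiS cv]]] := nlf_compact hK v1.
have e0 : 0 < rho / abs l by apply: divr_gt0.
have [N _ HN] := cvgr_dist_lt _ _ cv _ e0.
have near_c k : (N <= k)%N -> abs (v (phi k) - c) < rho / abs l.
  by move=> /HN /=; rewrite sub0r normrN ger0_norm ?abs_ge0.
have close : abs (v (phi N.+1) - v (phi N)) < rho / abs l.
  by apply: (abs_ultra_lt (y := c)); rewrite ?near_c // absB near_c.
have uv : u (phi N.+1) - u (phi N) = l * (v (phi N.+1) - v (phi N)).
  by rewrite /v mulrBr !(mulrC l) !mulfVK.
have := sep _ _ (phiS N); rewrite uv (nlf_mul hK).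
by move: close; rewrite ltr_pdivlMr // mulrC => /lt_le_trans/[apply]; rewrite ltxx.
Qed.

(* Otherwise, choosing greedily points rho-far from all previous ones yields a
   rho-separated bounded sequence. *)
Lemma totally_bounded_ball (rho M : R) : 0 < rho ->
  exists s : seq K, forall x, abs x <= M -> exists i, abs (x - nth 0 s i) < rho.
Proof.
move=> rho0; apply: contrapT => nonet.
have far (s : seq K) : exists x, abs x <= M /\ forall z, z \in s -> rho <= abs (x - z).
  apply: contrapT => nfar; apply: nonet; exists s => x xM.
  apply: contrapT => nclose; apply: nfar; exists x; split => // z zs.
  rewrite leNgt; apply/negP => xz; apply: nclose; exists (index z s).
  by rewrite nth_index.
have [g hg] := choice far.
pose L := fix L n := if n is n'.+1 then g (L n') :: L n' else [::].
have uL m n : (m < n)%N -> g (L m) \in L n.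
  elim: n => [//|n IH]; rewrite ltnS leq_eqVlt => /orP[/eqP ->|/IH h].
    by rewrite /= in_cons eqxx.
  by rewrite /= in_cons h orbT.
apply: (no_separated_seq (u := fun n => g (L n)) rho0) => [n|m n mn].
  exact: (hg (L n)).1.
exact: (hg (L n)).2 _ (uL _ _ mn).
Qed.

Lemma ball_nets (M : R) : exists s : nat -> seq K, forall n x,
  abs x <= M -> exists i, abs (x - nth 0 (s n) i) < n.+1%:R^-1.
Proof.
have inv_gt0 n : 0 < n.+1%:R^-1 :> R by rewrite invr_gt0.
have [s hs] := choice (fun n => totally_bounded_ball M (inv_gt0 n)).
by exists s.
Qed.

Definition excess (A B : set K) : \bar R :=
  ereal_sup [set ereal_inf [set (abs (a - b))%:E | b in B] | a in A].

Lemma dHE (A B : set K) : dH abs A B = maxe (excess A B) (excess B A).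
Proof. by []. Qed.

Lemma excess_le (A B : set K) (t : R) :
  (forall a, A a -> exists2 b, B b & abs (a - b) <= t) ->
  (excess A B <= t%:E)%E.
Proof.
move=> near; apply: ge_ereal_sup => _ [a Aa <-].
have [b Bb ab] := near a Aa.
apply: (@le_trans _ _ (abs (a - b))%:E); last by rewrite lee_fin.
by apply: ereal_inf_lbound; exists b.
Qed.

Lemma excess_lt (A B : set K) (t : R) : (excess A B < t%:E)%E ->
  forall a, A a -> exists2 b, B b & abs (a - b) < t.
Proof.
move=> lt a Aa.
have : (ereal_inf [set (abs (a - b))%:E | b in B] < t%:E)%E.
  by apply: le_lt_trans lt; apply: ereal_sup_ubound; exists a.
by move/ereal_inf_lt => [_ [b Bb <-]]; rewrite lte_fin; exists b.
Qed.

Section Measure.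
Variables (d : measure_display) (T : measurableType d) (P : probability T R).

Lemma ae_witness (A : set T) (Q : T -> Prop) : measurable A -> (0 < P A)%E ->
  (\forall w \ae P, Q w) -> exists2 w, A w & Q w.
Proof.
move=> mA PA [N [mN PN0 QN]]; apply: contrapT => noQ.
have AN : A `<=` N by move=> w Aw; apply: QN => Qw; apply: noQ; exists w.
have : (P A <= P N)%E by apply: le_measure => //; rewrite inE.
by rewrite PN0 => /(lt_le_trans PA); rewrite ltxx.
Qed.

Lemma ae_abs_bound_ge0 (f : T -> K) (r : R) :
  (\forall w \ae P, abs (f w) <= r) -> 0 <= r.
Proof.
move=> fr; have PT : (0 < P setT)%E by rewrite probability_setT.
have [w _ fwr] := ae_witness measurableT PT fr.
exact: le_trans (abs_ge0 _) fwr.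
Qed.

Lemma Linfty_ae_bounded (X : T -> K) : Linfty abs P X ->
  exists M : R, \forall w \ae P, abs (X w) <= M.
Proof.
move=> [_ Xfin]; rewrite /normInf in Xfin.
have [M XM] : exists M : R, (ess_sup P (fun w => (abs (X w))%:E) <= M%:E)%E.
  move: Xfin; case: (ess_sup _ _) => [r _|//|_]; first by exists r.
  by exists 0; rewrite leNye.
by exists M; move/ess_supP: XM; apply: filterS => w; rewrite lee_fin.
Qed.

Lemma notin_suppK (X : T -> K) (x : K) : ~ suppK abs P X x ->
  exists2 r : R, 0 < r & P (X @^-1` [set y | abs (y - x) < r]) = 0%E.
Proof.
move=> nsupp; apply: contrapT => nnull; apply: nsupp => r r0.
rewrite lt_neqAle measure_ge0 andbT eq_sym.
by apply/eqP => Pr0; apply: nnull; exists r.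
Qed.

(* Each point outside the support lies in a null ball of the countable family
   of balls of radius 1/(n+1) centred at the points of the nets. *)
Lemma ae_in_suppK (X : T -> K) : Linfty abs P X ->
  \forall w \ae P, suppK abs P X (X w).
Proof.
move=> hX; have [M XM] := Linfty_ae_bounded hX; have [s hs] := ball_nets M.
pose ball n i := X @^-1` [set y | abs (y - nth 0 (s n) i) < n.+1%:R^-1].
pose null n i := if P (ball n i) == 0%E then ball n i else set0.
have null_neg : P.-negligible (\bigcup_n \bigcup_i null n i).
  apply: negligible_bigcup => n; apply: negligible_bigcup => i.
  rewrite /null; case: ifPn => [/eqP|_]; last exact: negligible_set0.
  by move=> ?; apply/negligibleP => //; exact: hX.1.
apply: negligibleS (negligibleU XM null_neg) => w /= nsupp.
have [wM|] := pselect (abs (X w) <= M); last by left.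
right; have [r r0 Pr0] := notin_suppK nsupp.
have [n nr] : exists n : nat, n.+1%:R^-1 <= r.
  have r'0 : 0 <= r^-1 by rewrite invr_ge0 ltW.
  have := archi_boundP r'0; set n := Num.Def.archi_bound _.
  move=> rn; exists n; rewrite invf_ple ?posrE //.
  by apply: ltW; apply: lt_le_trans rn _; rewrite ler_nat.
have [i wi] := hs n _ wM.
have sub : ball n i `<=` X @^-1` [set y | abs (y - X w) < r].
  move=> v /= vi; apply: lt_le_trans nr.
  by apply: (abs_ultra_lt (y := nth 0 (s n) i)); rewrite // absB.
have Pball0 : P (ball n i) = 0%E.
  apply/eqP; rewrite eq_le measure_ge0 andbT -Pr0.
  by apply: le_measure => //; rewrite inE; exact: hX.1.
by exists n => //; exists i => //; rewrite /null Pball0 eqxx.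
Qed.

Lemma suppK_nonempty (X : T -> K) : Linfty abs P X -> exists x, suppK abs P X x.
Proof.
move=> hX; have PT : (0 < P setT)%E by rewrite probability_setT.
by have [w _ Sw] := ae_witness measurableT PT (ae_in_suppK hX); exists (X w).
Qed.

Lemma normInf_le_suppP (X : T -> K) (c : K) (r : R) : Linfty abs P X ->
  (normInf abs P (fun w => (X w - c)%R) <= r%:E)%E <->
  (forall x, suppK abs P X x -> abs (x - c) <= r).
Proof.
move=> hX; split => [/ess_supP Xr x Sx|Sr]; last first.
  apply/ess_supP; apply: filterS (ae_in_suppK hX) => w /Sr.
  by rewrite lee_fin.
have {}Xr : \forall w \ae P, abs (X w - c) <= r.
  by apply: filterS Xr => w; rewrite lee_fin.
rewrite leNgt; apply/negP => rxc.
have xc0 : 0 < abs (x - c) by apply: le_lt_trans rxc; exact: ae_abs_bound_ge0 Xr.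
have [w /= wx wc] := ae_witness (hX.1 x (abs (x - c))) (Sx _ xc0) Xr.
rewrite absB in wx.
by have := abs_ultra_lt wx (le_lt_trans wc rxc); rewrite ltxx.
Qed.

Section Support.
Variables (X : T -> K) (x0 : K).
Hypotheses (hX : Linfty abs P X) (Sx0 : suppK abs P X x0).

Lemma normInf_sub_suppK (c : K) : normInf abs P (fun w => (X w - c)%R) =
  maxe (normInf abs P (fun w => (X w - x0)%R)) (abs (c - x0))%:E.
Proof.
apply/eqP; rewrite eq_le; apply/andP; split; apply: lee_bound_ge => r.
  rewrite ge_max lee_fin => /andP[/(normInf_le_suppP _ _ hX) Xr cr].
  apply/(normInf_le_suppP _ _ hX) => x Sx.
  by apply: (abs_ultra_le (Xr _ Sx)); rewrite absB.
move=> /(normInf_le_suppP _ _ hX) Xr; rewrite ge_max lee_fin.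
have cr : abs (c - x0) <= r by rewrite absB; apply: Xr.
rewrite cr andbT; apply/(normInf_le_suppP _ _ hX) => x Sx.
exact: abs_ultra_le (Xr _ Sx) cr.
Qed.

Lemma epsK_suppK : epsK abs P X = normInf abs P (fun w => (X w - x0)%R).
Proof.
apply/eqP; rewrite eq_le; apply/andP; split.
  by apply: ereal_inf_lbound; exists x0.
apply: le_ereal_inf_tmp => _ [c _ <-].
by rewrite (normInf_sub_suppK c) le_max lexx.
Qed.

Lemma EK_suppK (c : K) : EK abs P X c <-> ((abs (c - x0))%:E <= epsK abs P X)%E.
Proof.
rewrite /EK /= normInf_sub_suppK -epsK_suppK.
by split => [<-|/max_idPl //]; rewrite le_max lexx orbT.
Qed.

End Support.

Lemma suppK_sub_EK (X : T -> K) : Linfty abs P X -> suppK abs P X `<=` EK abs P X.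
Proof. by move=> hX x Sx; rewrite /EK /= (epsK_suppK hX Sx). Qed.

Section TwoVariables.
Variables (X Y : T -> K).
Hypotheses (hX : Linfty abs P X) (hY : Linfty abs P Y).

Lemma epsK_le_max (t : R) x0 y0 :
  suppK abs P X x0 -> suppK abs P Y y0 -> abs (x0 - y0) <= t ->
  (forall y, suppK abs P Y y -> exists2 x, suppK abs P X x & abs (y - x) < t) ->
  (epsK abs P Y <= maxe (epsK abs P X) t%:E)%E.
Proof.
move=> Sx0 Sy0 x0y0 nearYX.
rewrite (epsK_suppK hX Sx0) (epsK_suppK hY Sy0); apply: lee_bound_ge => r.
rewrite ge_max lee_fin => /andP[/(normInf_le_suppP _ _ hX) Xr tr].
apply/(normInf_le_suppP _ _ hY) => y Sy; have [x Sx yx] := nearYX y Sy.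
apply: (abs_ultra_le (le_trans (ltW yx) tr)).
exact: abs_ultra_le (Xr _ Sx) (le_trans x0y0 tr).
Qed.

(* Either c is t-close to a support point x0 of X, which lies in E[X], or the
   ultrametric inequality forces c into the ball E[X] itself. *)
Lemma EK_near (t : R) :
  (forall x, suppK abs P X x -> exists2 y, suppK abs P Y y & abs (x - y) < t) ->
  (forall y, suppK abs P Y y -> exists2 x, suppK abs P X x & abs (y - x) < t) ->
  forall c, EK abs P Y c -> exists2 a, EK abs P X a & abs (c - a) <= t.
Proof.
move=> nearXY nearYX c Ec.
have [x0 Sx0] := suppK_nonempty hX; have [y0 Sy0 x0y0] := nearXY x0 Sx0.
have [cx0|x0c] := leP (abs (c - x0)) t; first by exists x0 => //; apply: suppK_sub_EK.
exists c; last by rewrite subrr abs0; apply: le_trans (ltW x0y0); exact: abs_ge0.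
apply/(EK_suppK hX Sx0).
have := abs_ultra c y0 x0; rewrite le_max => /orP[cy0|]; last first.
  by rewrite (absB y0) => /le_lt_trans/(_ x0y0)/(lt_trans x0c); rewrite ltxx.
rewrite -lee_fin in cy0.
have := le_trans (le_trans cy0 ((EK_suppK hY Sy0 c).1 Ec))
  (epsK_le_max Sx0 Sy0 (ltW x0y0) nearYX).
by rewrite le_max lee_fin [_ <= t]leNgt x0c orbF.
Qed.

Lemma suppK_near (r t : R) : (\forall w \ae P, abs (X w - Y w) <= r) -> r < t ->
  forall x, suppK abs P X x -> exists2 y, suppK abs P Y y & abs (x - y) <= t.
Proof.
move=> XYr rt x Sx.
have t0 : 0 < t by apply: le_lt_trans rt; exact: ae_abs_bound_ge0 XYr.
have [w /= xw [XYw SYw]] :=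
  ae_witness (hX.1 x t) (Sx _ t0) (filterI XYr (ae_in_suppK hY)).
exists (Y w) => //; apply/ltW/(abs_ultra_lt (y := X w)); first by rewrite absB.
exact: le_lt_trans XYw rt.
Qed.

End TwoVariables.
End Measure.
End Ultrametric.

Theorem mainTheorem3 (R : realType) (K : fieldType) (abs : K -> R)
  (hK : nonarch_local_field abs)
  (d : measure_display) (T : measurableType d) (P : probability T R)
  (X Y : T -> K) (hX : Linfty abs P X) (hY : Linfty abs P Y) :
  (dH abs (EK abs P X) (EK abs P Y) <= dH abs (suppK abs P X) (suppK abs P Y))%E /\
  (dH abs (suppK abs P X) (suppK abs P Y) <= normInf abs P (fun w => (X w - Y w)%R))%E.
Proof.
split.
- apply: lee_bound_gt => t; rewrite dHE gt_max => /andP[/excess_lt XY /excess_lt YX].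
  rewrite dHE ge_max; apply/andP; split; apply: excess_le => c.
  + by move=> /(EK_near hK hY hX YX XY).
  + by move=> /(EK_near hK hX hY XY YX).
- apply: lee_bound_ge => r /ess_supP XYr.
  have XY : \forall w \ae P, abs (X w - Y w) <= r.
    by apply: filterS XYr => w; rewrite lee_fin.
  have YX : \forall w \ae P, abs (Y w - X w) <= r.
    by apply: filterS XY => w; rewrite absB.
  apply: lee_bound_gt => t; rewrite lte_fin => rt.
  rewrite dHE ge_max; apply/andP; split; apply: excess_le => x.
  + by move=> /(suppK_near hK hX hY XY rt).
  + by move=> /(suppK_near hK hY hX YX rt).
Qed.
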